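(* Let $K$ be a field, $S=K[x_1,\ldots,x_n]$, $I\subset S$ a monomial ideal with $I\ne S$, with $\mathbb{Z}^n$-graded minimal free resolution of $S/I$, multidegrees $a_{ij}$ and scalar matrices $\lambda^{(i)}$ as in the context. Given $1<i\le p$ and $1\le j\le\beta_i$, let $k_1,\ldots,k_r$ be the integers $k$ with $\lambda^{(i)}_{kj}\ne0$. Then \[ x^{a_{ij}}=\operatorname{lcm}(x^{a_{i-1,k_1}},\ldots,x^{a_{i-1,k_r}}). \]
   Context: For $a\in\mathbb{N}^n$, $x^a=x_1^{a(1)}\cdots x_n^{a(n)}$. Let $0\to F_p\to\cdots\to F_1\to F_0\to S/I\to 0$ be the $\mathbb{Z}^n$-graded minimal free resolution of $S/I$ with differential $\partial$, where $F_0=S$ with basis $f_{01}$ of degree $0$, and $F_i=\bigoplus_{j=1}^{\beta_i}Sf_{ij}$ with $f_{ij}$ homogeneous of multidegree $a_{ij}\in\mathbb{N}^n$. Write $\partial(f_{ij})=\sum_k\lambda^{(i)}_{kj}x^{a_{ij}-a_{i-1,k}}f_{i-1,k}$ with $\lambda^{(i)}_{kj}\in K$, where $\lambda^{(i)}_{kj}=0$ whenever $a_{ij}-a_{i-1,k}\notin\mathbb{N}^n$. *)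

From HB Require Import structures.
From mathcomp Require Import all_boot all_order all_algebra.
From mathcomp Require Import mpoly.
Set Implicit Arguments. Unset Strict Implicit. Unset Printing Implicit Defensive.
Import Order.TTheory GRing.Theory.
Local Open Scope ring_scope.

Definition is_ideal (K : fieldType) (n : nat) (I : {pred {mpoly K[n]}}) : Prop :=
  [/\ 0 \in I,
      (forall f g, f \in I -> g \in I -> f + g \in I) &
      (forall f g, g \in I -> f * g \in I)].

Definition is_monomial_ideal (K : fieldType) (n : nat) (I : {pred {mpoly K[n]}}) : Prop :=
  is_ideal I /\
  forall f, f \in I -> exists s : seq ({mpoly K[n]} * 'X_{1..n}),
      f = \sum_(x <- s) x.1 * 'X_[x.2] /\ (forall x, x \in s -> 'X_[x.2] \in I).

Definition mdivides (n : nat) (a b : 'X_{1..n}) : Prop := forall t : 'I_n, (a t <= b t)%N.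

Definition mnm_lcm (n : nat) (s : seq 'X_{1..n}) : 'X_{1..n} :=
  [multinom \max_(m <- s) m t | t < n].

(* Matrix of the differential  d i : F_{i+1} -> F_i  (paper's \partial_{i+1}),
   F_i = S^(beta i), columns = images of basis elements f_{i+1,j}. *)

From HB Require Import structures.
From mathcomp Require Import all_boot all_order all_algebra.
From mathcomp Require Import mpoly.
Set Implicit Arguments.
Unset Strict Implicit.
Unset Printing Implicit Defensive.

Import Order.TTheory GRing.Theory.
Local Open Scope ring_scope.

(* Every x^(a_{i,k}) with lambda_kj <> 0 divides x^(a_{i+1,j}), hence so does their lcm
   x^m. If the quotient x^c were not 1, column j of the differential would be x^c g for a
   column g. Since S is a domain, exactness makes g a boundary d w, so e_j - x^c w is a
   cycle, hence a boundary; by minimality boundaries have no constant terms, yet the j-th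
   entry of e_j - x^c w has constant term 1. *)

Lemma mpolyX_neq0 {R : idomainType} n (m : 'X_{1..n}) : 'X_[m] != 0 :> {mpoly R[n]}.
Proof.
apply/eqP => /(congr1 (mcoeff m)).
by rewrite mcoeffX eqxx mcoeff0 => /eqP; rewrite oner_eq0.
Qed.

Lemma mcoeff0M (R : comNzRingType) n (p q : {mpoly R[n]}) :
  (p * q)@_0%MM = p@_0%MM * q@_0%MM.
Proof. exact: (rmorphM (mcoeff 0%MM)). Qed.

Lemma mulX_factor (R : idomainType) n (f : {mpoly R[n]}) (l : R) (b m c : 'X_{1..n}) :
  (b <= m)%MM -> (m <= c)%MM -> f * 'X_[b] = l%:MP * 'X_[c] ->
  f = 'X_[c - m] * (l%:MP * 'X_[m - b]).
Proof.
move=> le_bm le_mc fE; apply: (mulIf (mpolyX_neq0 b)).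
have cE : c = (c - m + (m - b) + b)%MM by rewrite -addmA !submK.
by rewrite fE {1}cE !mpolyXD !mulrA [l%:MP * _]mulrC.
Qed.

Section Lcm.

Variable n : nat.
Implicit Types (s : seq 'X_{1..n}) (m b : 'X_{1..n}).

Lemma mnm_lcmE s t : mnm_lcm s t = \max_(m <- s) m t.
Proof. by rewrite mnmE. Qed.

Lemma lepm_lcm s m : m \in s -> (m <= mnm_lcm s)%MM.
Proof. by move=> ms; apply/mnm_lepP => t; rewrite mnm_lcmE (leq_bigmax_seq m). Qed.

Lemma lcm_lepm s b : (forall m, m \in s -> m <= b)%MM -> (mnm_lcm s <= b)%MM.
Proof.
move=> le_sb; apply/mnm_lepP => t; rewrite mnm_lcmE.
by apply/bigmax_leqP_seq => m ms _; apply/mnm_lepP: t; apply: le_sb.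
Qed.

End Lcm.

Section MinimalComplex.

Variables (K : fieldType) (n : nat) (beta : nat -> nat).
Variable d : forall i : nat, 'M[{mpoly K[n]}]_(beta i, beta i.+1).
Hypothesis d_exact : forall i (v : 'cV_(beta i.+1)),
  d i *m v = 0 <-> exists w : 'cV_(beta i.+2), v = d i.+1 *m w.
Hypothesis d_minimal : forall i k j, (d i k j)@_0%MM = 0.

Lemma cycle_mcoeff0 i (v : 'cV_(beta i.+1)) :
  d i *m v = 0 -> forall r, (v r ord0)@_0%MM = 0.
Proof.
move=> /d_exact [w ->] r; rewrite mxE (big_morph _ (mcoeffD 0%MM) (mcoeff0 _ 0%MM)).
by rewrite big1 // => k _; rewrite mcoeff0M d_minimal mul0r.
Qed.

Lemma col_not_scale_mcoeff0 i (j : 'I_(beta i.+2)) (q : {mpoly K[n]})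
    (g : 'cV_(beta i.+1)) :
  q@_0%MM = 0 -> col j (d i.+1) <> q *: g.
Proof.
move=> q0 colj.
have qg_cycle : d i *m (q *: g) = 0.
  by rewrite -colj colE; apply/d_exact; exists (delta_mx j ord0).
have [w gE] : exists w : 'cV_(beta i.+2), q *: g = d i.+1 *m (q *: w).
  have [-> | q_neq0] := eqVneq q 0; first by exists 0; rewrite !scale0r mulmx0.
  move: qg_cycle; rewrite -scalemxAr => /eqP; rewrite scalemx_eq0 (negPf q_neq0) /=.
  by move=> /eqP /d_exact [w ->]; exists w; rewrite scalemxAr.
have ej_cycle : d i.+1 *m (delta_mx j ord0 - q *: w) = 0.
  by rewrite mulmxBr -colE colj gE subrr.
move: (cycle_mcoeff0 ej_cycle j); rewrite !mxE !eqxx mcoeffB mcoeff1 eqxx /=.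
by rewrite mcoeff0M q0 mul0r subr0 => /eqP; rewrite oner_eq0.
Qed.

End MinimalComplex.

Theorem lemma1p5
  (K : fieldType) (n : nat) (I : {pred {mpoly K[n]}})
  (p : nat) (beta : nat -> nat)
  (a : forall i : nat, 'I_(beta i) -> 'X_{1..n})
  (lambda : forall i : nat, 'I_(beta i) -> 'I_(beta i.+1) -> K)
  (d : forall i : nat, 'M[{mpoly K[n]}]_(beta i, beta i.+1)) :
  is_monomial_ideal I -> (1 : {mpoly K[n]}) \notin I ->
  beta 0%N = 1%N -> (forall j, a 0%N j = 0%MM) ->
  (forall i, (p < i)%N -> beta i = 0%N) ->
  (forall i k j, ~ mdivides (a i k) (a i.+1 j) -> lambda i k j = 0) ->
  (forall i k j, d i k j * 'X_[a i k] = (lambda i k j)%:MP * 'X_[a i.+1 j]) ->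
  (forall f, f \in I <-> exists w : 'cV_(beta 1%N),
       forall r : 'I_(beta 0%N), (d 0%N *m w) r ord0 = f) ->
  (forall i (v : 'cV_(beta i.+1)),
       d i *m v = 0 <-> exists w : 'cV_(beta i.+2), v = d i.+1 *m w) ->
  (forall i k j, (d i k j)@_0%MM = 0) ->
  forall i, (0 < i)%N -> (i < p)%N ->
  forall j : 'I_(beta i.+1),
    'X_[a i.+1 j] =
    'X_[mnm_lcm [seq a i k | k <- enum 'I_(beta i) & lambda i k j != 0]] :> {mpoly K[n]}.
Proof.
move=> _ _ _ _ _ a_div d_mon _ d_exact d_minimal [|i] // _ _ j.
set A := a i.+2 j; set s := [seq _ | _ <- _ & _]; set m := mnm_lcm s.
have le_sA : forall b, b \in s -> (b <= A)%MM.
  move=> b /mapP [k]; rewrite mem_filter => /andP [lkj _] ->.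
  by case: mnm_lepP => // ndiv; rewrite a_div ?eqxx in lkj.
have le_mA : (m <= A)%MM := lcm_lepm le_sA.
have [-> // | mNA] := eqVneq m A; exfalso.
pose g := \col_k ((lambda i.+1 k j)%:MP * 'X_[m - a i.+1 k]) : 'cV_(beta i.+1).
apply: (col_not_scale_mcoeff0 d_exact d_minimal (j := j) (q := 'X_[A - m]) (g := g)).
  rewrite mcoeffX; case: eqP => // Am0; case/eqP: mNA.
  by rewrite -(submK le_mA) Am0 add0m.
apply/matrixP => k z; rewrite (ord1 z) !mxE.
have [lk0 | lkN0] := eqVneq (lambda i.+1 k j) 0.
  apply: (mulIf (mpolyX_neq0 (a i.+1 k))).
  by rewrite d_mon lk0 mpolyC0 !(mul0r, mulr0).
apply: mulX_factor (d_mon _ k j) => //; apply: lepm_lcm.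
by rewrite map_f // mem_filter lkN0 mem_enum.
Qed.
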